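(* Let $E$ be a contact Riemannian Lie algebroid with associated almost contact Riemannian structure $(F_E,\xi,\eta,g_E)$ and Levi-Civita connection $\nabla$ of $g_E$. Then $E$ is $K$-contact (i.e. $\xi$ is a Killing section) if and only if $\nabla_s\xi=-F_E(s)$ for every $s\in\Gamma(E)$.
   Context: A Lie algebroid $(E,\rho_E,[\cdot,\cdot]_E)$ over $M$ is a vector bundle with anchor $\rho_E:E\to TM$ and Lie bracket on $\Gamma(E)$ with $[s_1,fs_2]_E=f[s_1,s_2]_E+\rho_E(s_1)(f)s_2$. For a 1-form $\eta$, $(d_E\eta)(s_1,s_2)=\frac12\{\rho_E(s_1)(\eta(s_2))-\rho_E(s_2)(\eta(s_1))-\eta([s_1,s_2]_E)\}$. For $E$ of rank $2m+1$, an almost contact Riemannian structure $(F_E,\xi,\eta,g_E)$: endomorphism $F_E$, $\xi\in\Gamma(E)$, $\eta\in\Gamma(E^* )$, bundle metric $g_E$ with $F_E^2=-I_E+\eta\otimes\xi$, $\eta(\xi)=1$, $g_E(F_Es_1,F_Es_2)=g_E(s_1,s_2)-\eta(s_1)\eta(s_2)$; fundamental form $\Omega_E(s_1,s_2)=g_E(s_1,F_Es_2)$. $E$ is contact Riemannian if also $\eta\wedge(d_E\eta)^m$ vanishes nowhere and $d_E\eta=\Omega_E$. $\xi$ is Killing if $\rho_E(\xi)(g_E(s_1,s_2))-g_E([\xi,s_1]_E,s_2)-g_E(s_1,[\xi,s_2]_E)=0$ for all $s_1,s_2$; a contact Riemannian Lie algebroid with Killing $\xi$ is called $K$-contact. The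 Levi-Civita connection $\nabla$ is the unique $E$-connection ($\nabla_{fs}s'=f\nabla_ss'$, $\nabla_s(fs')=f\nabla_ss'+\rho_E(s)(f)s'$) that is torsion-free ($\nabla_{s_1}s_2-\nabla_{s_2}s_1=[s_1,s_2]_E$) and metric ($\rho_E(s)(g_E(s_1,s_2))=g_E(\nabla_ss_1,s_2)+g_E(s_1,\nabla_ss_2)$). *)

(* Lie algebroids modelled concretely, pointwise:
   points M, fibres identified (set-theoretically) with 'rV[R]_n,
   smooth functions = a predicate A on M -> R, smooth sections Gamma(E)
   = a predicate G on M -> 'rV[R]_n. *)
From HB Require Import structures.
From mathcomp Require Import all_boot all_order all_algebra all_fingroup.
From mathcomp Require Import reals.
Set Implicit Arguments. Unset Strict Implicit. Unset Printing Implicit Defensive.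
Import GRing.Theory Num.Theory.
Local Open Scope ring_scope.

Section Defs.
Variables (R : realType) (M : Type) (n : nat).
Notation fn := (M -> R).
Notation sec := (M -> 'rV[R]_n).

Definition cstf (c : R) : fn := fun _ => c.
Definition addf (f h : fn) : fn := fun x => f x + h x.
Definition mulf (f h : fn) : fn := fun x => f x * h x.
Definition zsec : sec := fun _ => 0.
Definition adds (s t : sec) : sec := fun x => s x + t x.
Definition scales (f : fn) (s : sec) : sec := fun x => f x *: s x.

Definition FE (F : M -> 'M[R]_n) (s : sec) : sec := fun x => s x *m F x.
Definition etaE (eta : M -> 'cV[R]_n) (s : sec) : fn := fun x => (s x *m eta x) 0 0.
Definition gE (g : M -> 'M[R]_n) (s t : sec) : fn :=
  fun x => (s x *m g x *m (t x)^T) 0 0.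

(* A = C^oo(M) (a subalgebra of M -> R containing constants),
   G = Gamma(E) (an A-module of sections spanning every fibre) *)
Record vector_bundle (A : fn -> Prop) (G : sec -> Prop) : Prop := {
  vb_cst : forall c, A (cstf c);
  vb_addf : forall f h, A f -> A h -> A (addf f h);
  vb_mulf : forall f h, A f -> A h -> A (mulf f h);
  vb_oppf : forall f, A f -> A (fun x => - f x);
  vb_zero : G zsec;
  vb_adds : forall s t, G s -> G t -> G (adds s t);
  vb_scales : forall f s, A f -> G s -> G (scales f s);
  vb_span : forall (x : M) (v : 'rV[R]_n), exists s, G s /\ s x = v }.

Record lie_algebroid (A : fn -> Prop) (G : sec -> Prop)
    (rho : sec -> fn -> fn) (br : sec -> sec -> sec) : Prop := {
  la_vb : vector_bundle A G;
  (* anchor: bundle map E -> TM, vector fields acting as derivations *)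
  la_rho_A : forall s f, G s -> A f -> A (rho s f);
  la_rho_add : forall s t f, G s -> G t -> A f ->
      rho (adds s t) f = addf (rho s f) (rho t f);
  la_rho_scale : forall h s f, A h -> G s -> A f ->
      rho (scales h s) f = mulf h (rho s f);
  la_der_add : forall s f h, G s -> A f -> A h ->
      rho s (addf f h) = addf (rho s f) (rho s h);
  la_der_cst : forall s c f, G s -> A f ->
      rho s (mulf (cstf c) f) = mulf (cstf c) (rho s f);
  la_der_mul : forall s f h, G s -> A f -> A h ->
      rho s (mulf f h) = addf (mulf f (rho s h)) (mulf h (rho s f));
  la_br_G : forall s t, G s -> G t -> G (br s t);
  la_br_add : forall s t u, G s -> G t -> G u ->
      br (adds s t) u = adds (br s u) (br t u);
  la_br_cst : forall c s t, G s -> G t ->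
      br (scales (cstf c) s) t = scales (cstf c) (br s t);
  la_br_skew : forall s t, G s -> G t -> br s t = scales (cstf (-1)) (br t s);
  la_br_jacobi : forall s t u, G s -> G t -> G u ->
      adds (br s (br t u)) (adds (br t (br u s)) (br u (br s t))) = zsec;
  la_leibniz : forall s1 s2 f, G s1 -> G s2 -> A f ->
      br s1 (scales f s2) = adds (scales f (br s1 s2)) (scales (rho s1 f) s2) }.

Definition dE (rho : sec -> fn -> fn) (br : sec -> sec -> sec)
    (eta : M -> 'cV[R]_n) (s1 s2 : sec) : fn :=
  fun x => 2^-1 * (rho s1 (etaE eta s2) x - rho s2 (etaE eta s1) x
                    - etaE eta (br s1 s2) x).

Definition OmegaE (F : M -> 'M[R]_n) (g : M -> 'M[R]_n) (s1 s2 : sec) : fn :=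
  gE g s1 (FE F s2).

Record almost_contact_riemannian (A : fn -> Prop) (G : sec -> Prop)
    (F : M -> 'M[R]_n) (xi : sec) (eta : M -> 'cV[R]_n) (g : M -> 'M[R]_n)
    : Prop := {
  ac_F_G : forall s, G s -> G (FE F s);
  ac_xi_G : G xi;
  ac_eta_A : forall s, G s -> A (etaE eta s);
  ac_g_A : forall s t, G s -> G t -> A (gE g s t);
  ac_g_sym : forall x, (g x)^T = g x;
  ac_g_pos : forall x (v : 'rV[R]_n), v != 0 -> 0 < (v *m g x *m v^T) 0 0;
  ac_F2 : forall s, G s ->
      FE F (FE F s) = adds (scales (cstf (-1)) s) (scales (etaE eta s) xi);
  ac_eta_xi : etaE eta xi = cstf 1;
  ac_g_F : forall s1 s2, G s1 -> G s2 ->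
      gE g (FE F s1) (FE F s2)
      = fun x => gE g s1 s2 x - etaE eta s1 x * etaE eta s2 x }.

End Defs.

Section Contact.
Variables (R : realType) (M : Type) (m : nat).
Notation n := (m.*2.+1).
Notation sec := (M -> 'rV[R]_n).

(* value at x of eta /\ (d_E eta)^m on s_0, ..., s_{2m}
   (up to a positive normalisation constant, irrelevant for vanishing) *)
Definition eta_wedge_deta (rho : sec -> (M -> R) -> (M -> R))
    (br : sec -> sec -> sec) (eta : M -> 'cV[R]_n) (s : 'I_n -> sec) (x : M) : R :=
  \sum_(sg : 'S_n)
    (-1) ^+ odd_perm sg * etaE eta (s (sg ord0)) x *
    \prod_(i < m) dE rho br eta (s (sg (inord i.*2.+1))) (s (sg (inord i.*2.+2))) x.

Record contact_riemannian (A : (M -> R) -> Prop) (G : sec -> Prop)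
    (rho : sec -> (M -> R) -> (M -> R)) (br : sec -> sec -> sec)
    (F : M -> 'M[R]_n) (xi : sec) (eta : M -> 'cV[R]_n) (g : M -> 'M[R]_n)
    : Prop := {
  cr_lie : lie_algebroid A G rho br;
  cr_acr : almost_contact_riemannian A G F xi eta g;
  cr_nowhere : forall x : M, exists s : 'I_n -> sec,
      (forall i, G (s i)) /\ eta_wedge_deta rho br eta s x != 0;
  cr_deta : forall s1 s2, G s1 -> G s2 ->
      dE rho br eta s1 s2 = OmegaE F g s1 s2 }.
End Contact.

Section Conn.
Variables (R : realType) (M : Type) (n : nat).
Notation sec := (M -> 'rV[R]_n).

Record levi_civita (A : (M -> R) -> Prop) (G : sec -> Prop)
    (rho : sec -> (M -> R) -> (M -> R)) (br : sec -> sec -> sec)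
    (g : M -> 'M[R]_n) (nabla : sec -> sec -> sec) : Prop := {
  lc_G : forall s t, G s -> G t -> G (nabla s t);
  lc_add1 : forall s s' t, G s -> G s' -> G t ->
      nabla (adds s s') t = adds (nabla s t) (nabla s' t);
  lc_lin1 : forall f s t, A f -> G s -> G t ->
      nabla (scales f s) t = scales f (nabla s t);
  lc_add2 : forall s t t', G s -> G t -> G t' ->
      nabla s (adds t t') = adds (nabla s t) (nabla s t');
  lc_leib2 : forall f s t, A f -> G s -> G t ->
      nabla s (scales f t) = adds (scales f (nabla s t)) (scales (rho s f) t);
  lc_torsion : forall s1 s2, G s1 -> G s2 ->
      adds (nabla s1 s2) (scales (cstf (-1)) (nabla s2 s1)) = br s1 s2;
  lc_metric : forall s s1 s2, G s -> G s1 -> G s2 ->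
      rho s (gE g s1 s2) = addf (gE g (nabla s s1) s2) (gE g s1 (nabla s s2)) }.

Definition killing (G : sec -> Prop) (rho : sec -> (M -> R) -> (M -> R))
    (br : sec -> sec -> sec) (g : M -> 'M[R]_n) (xi : sec) : Prop :=
  forall s1 s2, G s1 -> G s2 ->
    forall x, rho xi (gE g s1 s2) x - gE g (br xi s1) s2 x - gE g s1 (br xi s2) x = 0.
End Conn.

From mathcomp Require Import all_boot all_order all_algebra all_fingroup.
From mathcomp Require Import reals.
From mathcomp Require Import ring lra.
From Stdlib Require Import FunctionalExtensionality.
Set Implicit Arguments. Unset Strict Implicit. Unset Printing Implicit Defensive.
Import Order.TTheory GRing.Theory Num.Theory.
Local Open Scope ring_scope.

(** Metricity and torsion-freeness of the Levi-Civita connection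
    give (L_xi g)(s1, s2) = g(nabla_s1 xi, s2) + g(s1, nabla_s2 xi), and, since
    eta = g(., xi), they also give 2 d_E eta(s1, s2) = g(s2, nabla_s1 xi) -
    g(s1, nabla_s2 xi).  As d_E eta = Omega_E is skew, xi is Killing exactly
    when s |-> nabla_s xi is g-skew, i.e. when g(nabla_s1 xi, s2) =
    Omega_E(s2, s1) = -g(F_E s1, s2) for all s2; nondegeneracy of g finishes. *)

Section BilinearForm.
Variables (R : realType) (n : nat) (g : 'M[R]_n).

Definition bform (v w : 'rV[R]_n) : R := (v *m g *m w^T) 0 0.

Lemma bformDl u v w : bform (u + v) w = bform u w + bform v w.
Proof. by rewrite /bform !mulmxDl mxE. Qed.

Lemma bformZl c v w : bform (c *: v) w = c * bform v w.
Proof. by rewrite /bform -!scalemxAl mxE. Qed.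

Lemma bformNl v w : bform (- v) w = - bform v w.
Proof. by rewrite -scaleN1r bformZl mulN1r. Qed.

Hypothesis g_sym : g^T = g.

Lemma bformC v w : bform v w = bform w v.
Proof.
rewrite /bform -[in RHS](trmxK (w *m g *m v^T)) [in RHS]mxE.
by rewrite !trmx_mul trmxK g_sym mulmxA.
Qed.

Lemma bformDr u v w : bform w (u + v) = bform w u + bform w v.
Proof. by rewrite bformC bformDl !(bformC _ w). Qed.

Lemma bformNr v w : bform w (- v) = - bform w v.
Proof. by rewrite bformC bformNl bformC. Qed.

End BilinearForm.

Lemma gEE (R : realType) (M : Type) (n : nat) (g : M -> 'M[R]_n)
    (s t : M -> 'rV[R]_n) (x : M) :
  gE g s t x = bform (g x) (s x) (t x).
Proof. by []. Qed.

Section AlmostContact.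
Variables (R : realType) (M : Type) (n : nat).
Variables (A : (M -> R) -> Prop) (G : (M -> 'rV[R]_n) -> Prop).
Variables (F : M -> 'M[R]_n) (xi : M -> 'rV[R]_n).
Variables (eta : M -> 'cV[R]_n) (g : M -> 'M[R]_n).
Hypothesis Hac : almost_contact_riemannian A G F xi eta g.
Hypothesis span : forall (x : M) (v : 'rV[R]_n), exists s, G s /\ s x = v.

Lemma F2_at s x : G s -> s x *m F x *m F x = - s x + etaE eta s x *: xi x.
Proof.
move=> hs; have := congr1 (fun f => f x) (ac_F2 Hac hs).
by rewrite /FE /adds /scales /cstf /= scaleN1r.
Qed.

Lemma etaE_xi_at x : etaE eta xi x = 1.
Proof. by have := congr1 (fun f => f x) (ac_eta_xi Hac). Qed.

(* Writing F xi = s x, the relation F^2 = -I + eta (x) xi applied to s gives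
   F xi = c xi with c = eta(s); then c^2 xi = F^2 xi = 0. *)
Lemma xi_F x : xi x *m F x = 0.
Proof.
have FFxi : xi x *m F x *m F x = 0.
  by rewrite F2_at ?etaE_xi_at ?scale1r ?addNr //; apply: ac_xi_G Hac.
have [s [hs sx]] := span x (xi x *m F x).
have := F2_at x hs; rewrite sx FFxi mul0mx => /eqP.
rewrite eq_sym addrC subr_eq0 => /eqP/esym Fxi.
set c := etaE eta s x in Fxi.
have c2 : (c * c) *: xi x = 0 by rewrite -scalerA -Fxi scalemxAl -Fxi FFxi.
have /eqP : c * c = 0.
  have := congr1 (fun v => (v *m eta x) 0 0) c2.
  have := etaE_xi_at x; rewrite /etaE /=; set xi_eta := xi x *m eta x.
  by rewrite -scalemxAl -/xi_eta mul0mx !mxE => ->; rewrite mulr1.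
by rewrite mulf_eq0 orbb => /eqP c0; rewrite Fxi c0 scale0r.
Qed.

Lemma etaE_gE s : G s -> etaE eta s = gE g s xi.
Proof.
move=> hs; apply: functional_extensionality => x.
have := congr1 (fun f => f x) (ac_g_F Hac hs (ac_xi_G Hac)).
rewrite /= /gE /FE xi_F trmx0 mulmx0 mxE etaE_xi_at mulr1 => /eqP.
by rewrite eq_sym subr_eq0 => /eqP.
Qed.

Lemma bform_nondeg x w :
  (forall s, G s -> bform (g x) w (s x) = 0) -> w = 0.
Proof.
move=> orth; have [s [hs sx]] := span x w.
have := orth s hs; rewrite sx; case: (eqVneq w 0) => // /(ac_g_pos Hac x).
by move=> pos; rewrite /bform => w0; rewrite w0 ltxx in pos.
Qed.

End AlmostContact.

Lemma dE_skew (R : realType) (M : Type) (n : nat)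
    (A : (M -> R) -> Prop) (G : (M -> 'rV[R]_n) -> Prop)
    (rho : (M -> 'rV[R]_n) -> (M -> R) -> (M -> R))
    (br : (M -> 'rV[R]_n) -> (M -> 'rV[R]_n) -> (M -> 'rV[R]_n))
    (eta : M -> 'cV[R]_n) s1 s2 x :
  lie_algebroid A G rho br -> G s1 -> G s2 ->
  dE rho br eta s1 s2 x = - dE rho br eta s2 s1 x.
Proof.
move=> Hla h1 h2; rewrite /dE (la_br_skew Hla h1 h2) /etaE /scales /cstf.
rewrite -scalemxAl mxE; ring.
Qed.

Section LeviCivita.
Variables (R : realType) (M : Type) (n : nat).
Variables (A : (M -> R) -> Prop) (G : (M -> 'rV[R]_n) -> Prop).
Variables (rho : (M -> 'rV[R]_n) -> (M -> R) -> (M -> R)).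
Variables (br nabla : (M -> 'rV[R]_n) -> (M -> 'rV[R]_n) -> (M -> 'rV[R]_n)).
Variables (g : M -> 'M[R]_n) (xi : M -> 'rV[R]_n).
Hypothesis Hlc : levi_civita A G rho br g nabla.
Hypothesis g_sym : forall x, (g x)^T = g x.
Hypothesis xi_G : G xi.

Lemma torsion_at s1 s2 x : G s1 -> G s2 ->
  br s1 s2 x = nabla s1 s2 x - nabla s2 s1 x.
Proof.
move=> h1 h2; have := congr1 (fun f => f x) (lc_torsion Hlc h1 h2).
by rewrite /adds /scales /cstf /= scaleN1r => <-.
Qed.

Lemma metric_at s s1 s2 x : G s -> G s1 -> G s2 ->
  rho s (gE g s1 s2) x
  = bform (g x) (nabla s s1 x) (s2 x) + bform (g x) (s1 x) (nabla s s2 x).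
Proof.
by move=> h h1 h2; have := congr1 (fun f => f x) (lc_metric Hlc h h1 h2).
Qed.

Lemma Lie_derivative_g s1 s2 x : G s1 -> G s2 ->
  rho xi (gE g s1 s2) x - gE g (br xi s1) s2 x - gE g s1 (br xi s2) x
  = bform (g x) (nabla s1 xi x) (s2 x) + bform (g x) (s1 x) (nabla s2 xi x).
Proof.
move=> h1 h2; rewrite metric_at // !gEE !torsion_at //.
rewrite bformDl (bformDr (g_sym x)) bformNl (bformNr (g_sym x)); ring.
Qed.

Lemma dE_nabla (br_G : forall s t, G s -> G t -> G (br s t))
    (eta : M -> 'cV[R]_n) (eta_g : forall s, G s -> etaE eta s = gE g s xi)
    s1 s2 x : G s1 -> G s2 ->
  2 * dE rho br eta s1 s2 x
  = bform (g x) (s2 x) (nabla s1 xi x) - bform (g x) (s1 x) (nabla s2 xi x).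
Proof.
move=> h1 h2; have h12 := br_G _ _ h1 h2.
rewrite /dE /= !eta_g // !metric_at // gEE torsion_at //.
rewrite bformDl bformNl (bformC (g_sym x) (nabla s1 s2 x)).
by rewrite (bformC (g_sym x) (nabla s2 s1 x)); field.
Qed.

End LeviCivita.

Theorem proposition4p6 (R : realType) (M : Type) (m : nat)
    (A : (M -> R) -> Prop) (G : (M -> 'rV[R]_(m.*2.+1)) -> Prop)
    (rho : (M -> 'rV[R]_(m.*2.+1)) -> (M -> R) -> (M -> R))
    (br : (M -> 'rV[R]_(m.*2.+1)) -> (M -> 'rV[R]_(m.*2.+1)) -> (M -> 'rV[R]_(m.*2.+1)))
    (F : M -> 'M[R]_(m.*2.+1)) (xi : M -> 'rV[R]_(m.*2.+1))
    (eta : M -> 'cV[R]_(m.*2.+1)) (g : M -> 'M[R]_(m.*2.+1))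
    (nabla : (M -> 'rV[R]_(m.*2.+1)) -> (M -> 'rV[R]_(m.*2.+1)) -> (M -> 'rV[R]_(m.*2.+1))) :
  contact_riemannian A G rho br F xi eta g ->
  levi_civita A G rho br g nabla ->
  (killing G rho br g xi <->
   forall s, G s -> nabla s xi = scales (cstf (-1)) (FE F s)).
Proof.
move=> [Hla Hac _ Hdeta] Hlc.
have span := vb_span (la_vb Hla); have gsym := ac_g_sym Hac.
have xi_G := ac_xi_G Hac; have Lie_xi_g := Lie_derivative_g Hlc gsym xi_G.
have Omega s1 s2 x : G s1 -> G s2 -> 2 * bform (g x) (s1 x) (s2 x *m F x)
    = bform (g x) (s2 x) (nabla s1 xi x) - bform (g x) (s1 x) (nabla s2 xi x).
  move=> h1 h2; have := dE_nabla Hlc gsym xi_G (la_br_G Hla) (etaE_gE Hac span) x h1 h2.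
  by rewrite Hdeta.
have Omega_skew s1 s2 x : G s1 -> G s2 ->
    bform (g x) (s1 x) (s2 x *m F x) = - bform (g x) (s2 x) (s1 x *m F x).
  move=> h1 h2; have := dE_skew eta x Hla h1 h2.
  by rewrite !Hdeta.
split=> [killing_xi s1 h1 | nabla_xi s1 s2 h1 h2 x].
- apply: functional_extensionality => x; apply/eqP.
  rewrite /scales /cstf /FE scaleN1r -addr_eq0; apply/eqP.
  apply: (bform_nondeg Hac span) => s2 h2; rewrite bformDl.
  have := killing_xi s1 s2 h1 h2 x; rewrite Lie_xi_g //.
  have := Omega s1 s2 x h1 h2; have := Omega_skew s1 s2 x h1 h2.
  rewrite !(bformC (gsym x) (s2 x)); lra.
- rewrite Lie_xi_g // !nabla_xi // /scales /cstf /FE !scaleN1r.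
  rewrite bformNl (bformNr (gsym x)) (bformC (gsym x) (s1 x *m F x)) Omega_skew //.
  by rewrite opprK subrr.
Qed.
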